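(* Let $p,q>0$, $x\ge0$, $0\le y\le1$. Then both $y_k=B_{k,q}(x,y)$ and $y_k=\bar B_{k,q}(x,y)$ satisfy the four-term recurrence $$c_3y_{p+3}+c_2y_{p+2}+c_1y_{p+1}+c_0y_p=0,$$ where $$c_0=(p+q)y^2,\quad c_1=-y\left(p+1-\tfrac12xy+y(p+q)\right),\quad c_2=y\left(p+1-\tfrac12xy\right)-\tfrac12xy,\quad c_3=\tfrac12xy .$$
   Context: For $p,q>0$ and $0\le y\le 1$, $I_y(p,q)=\frac{1}{B(p,q)}\int_0^y t^{p-1}(1-t)^{q-1}\,dt$ is the regularized incomplete beta function, with $B(p,q)=\Gamma(p)\Gamma(q)/\Gamma(p+q)$. The cumulative noncentral beta distribution is $B_{p,q}(x,y)=e^{-x/2}\sum_{j=0}^\infty \frac{1}{j!}\left(\frac x2\right)^j I_y(p+j,q)$ for $x\ge0$, and its complement is $\bar B_{p,q}(x,y)=1-B_{p,q}(x,y)$. *)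

From Stdlib Require Import Arith Reals ClassicalEpsilon.
Open Scope R_scope.

Definition beta_integrand (p q : R) (t : R) : R :=
  Rpower t (p - 1) * Rpower (1 - t) (q - 1).

Definition beta_partial_integrals (p q y : R) (v : R) : Prop :=
  v = 0 \/
  exists (a b : R) (pr : Riemann_integrable (beta_integrand p q) a b),
    0 < a /\ a <= b /\ b < y /\ b < 1 /\ v = RiemannInt pr.

(* Improper integral  \int_0^y t^(p-1)(1-t)^(q-1) dt  (0 <= y <= 1).
   The integrand is nonnegative and continuous on (0,1), so the (possibly
   improper) integral is the supremum of its integrals over compact
   subintervals. *)
Definition incbeta_int (p q y : R) : R :=
  epsilon (inhabits 0) (fun v => is_lub (beta_partial_integrals p q y) v).

Definition Beta (p q : R) : R := incbeta_int p q 1.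

Definition I_reg (y p q : R) : R := incbeta_int p q y / Beta p q.

Definition series_sum (u : nat -> R) : R :=
  epsilon (inhabits 0) (fun l => infinite_sum u l).

Definition ncbeta (p q x y : R) : R :=
  exp (- x / 2) *
  series_sum (fun j => / INR (Factorial.fact j) * (x / 2) ^ j * I_reg y (p + INR j) q).

Definition ncbeta_c (p q x y : R) : R := 1 - ncbeta p q x y.

(* Write J_a(y) = int_0^y t^(a-1) (1-t)^(q-1) dt and I_a = J_a(y) / B(a,q).
   1. Integrating (t^a (1-t)^q)' = a t^(a-1)(1-t)^(q-1) - (a+q) t^a (1-t)^(q-1)
      over segments exhausting (0, y) gives  a J_a - (a+q) J_(a+1) = y^a (1-y)^q
      (the boundary term vanishes at y = 0 and y = 1).  At y = 1 this is
      B(a+1,q) = a B(a,q) / (a+q), and together the two yield the contiguous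
      relation  (a+1) (I_(a+1) - I_(a+2)) = (a+q) y (I_a - I_(a+1)).
   2. B_(p,q)(x,y) = e^(-x/2) sum_j w_j I_(p+j) with Poisson weights
      w_j = (x/2)^j / j!.  Since j w_j = (x/2) w_(j-1), mixing the contiguous
      relation at a = p + j over j turns its j-dependent coefficients into
      shifts, which is exactly the four-term recurrence; the complement
      satisfies it too because c0 + c1 + c2 + c3 = 0.
   Since incbeta_int is defined as a supremum of integrals over compact
   segments, the file first develops those segment integrals (positivity,
   monotonicity, integration by parts, a uniform bound), then identifies the
   supremum with the limit along an exhausting sequence of segments. *)

From Stdlib Require Import Reals Lra Lia ClassicalEpsilon Classical.
From Coquelicot Require Import Coquelicot.
Open Scope R_scope.

(* Coquelicot states its results with the generic module operations; on the
   reals they are convertible to the usual ones, and this tactic exposes them. *)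
Ltac real_ops :=
  cbv beta;
  repeat match goal with
  | |- context [@plus ?G ?u ?v] => change (@plus G u v) with (u + v)
  | |- context [@mult ?K ?u ?v] => change (@mult K u v) with (u * v)
  | |- context [@scal ?K ?V ?u ?v] => change (@scal K V u v) with (u * v)
  | |- context [@minus ?G ?u ?v] => change (@minus G u v) with (u - v)
  | |- context [@opp ?G ?u] => change (@opp G u) with (- u)
  end;
  try match goal with |- @eq _ ?u ?v => change (@eq R u v) end.

Lemma Rpower_pos (t r : R) : 0 < Rpower t r.
Proof. apply exp_pos. Qed.

Lemma Rpower_peel (t r : R) : 0 < t -> Rpower t r = t * Rpower t (r - 1).
Proof.
  intros Ht. replace r with ((r - 1) + 1) at 1 by ring.
  rewrite Rpower_plus, Rpower_1 by lra. ring.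
Qed.

Lemma Rpower_one (r : R) : Rpower 1 r = 1.
Proof. unfold Rpower. now rewrite ln_1, Rmult_0_r, exp_0. Qed.

Lemma Rpower_le_1 (s r : R) : 0 < s <= 1 -> 0 <= r -> Rpower s r <= 1.
Proof.
  intros Hs Hr. rewrite <- (Rpower_one r). apply Rle_Rpower_l; lra.
Qed.

Lemma is_derive_Rpower (t r : R) : 0 < t ->
  is_derive (fun s => Rpower s r) t (r * Rpower t (r - 1)).
Proof. intros Ht. apply is_derive_Reals. now apply derivable_pt_lim_power. Qed.

Lemma is_derive_Rpower_compl (t r : R) : t < 1 ->
  is_derive (fun s => Rpower (1 - s) r) t (- (r * Rpower (1 - t) (r - 1))).
Proof.
  intros Ht.
  assert (Hlin : is_derive (fun s : R => 1 - s) t (-1)).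
  { apply is_derive_Reals. replace (-1) with (0 - 1) by ring.
    apply derivable_pt_lim_minus; [apply derivable_pt_lim_const | apply derivable_pt_lim_id]. }
  replace (- (r * Rpower (1 - t) (r - 1))) with (scal (-1) (r * Rpower (1 - t) (r - 1)))
    by (real_ops; ring).
  exact (is_derive_comp (fun s => Rpower s r) (fun s => 1 - s) t _ _
           (is_derive_Rpower (1 - t) r ltac:(lra)) Hlin).
Qed.

Lemma continuous_Rpower (t r : R) : 0 < t -> continuous (fun s => Rpower s r) t.
Proof.
  intros Ht. apply (@ex_derive_continuous R_AbsRing R_NormedModule).
  eexists. now apply is_derive_Rpower.
Qed.

Lemma continuous_Rpower_compl (t r : R) : t < 1 -> continuous (fun s => Rpower (1 - s) r) t.
Proof.
  intros Ht. apply (@ex_derive_continuous R_AbsRing R_NormedModule).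
  eexists. now apply is_derive_Rpower_compl.
Qed.

Lemma exp_le_mono (u v : R) : u <= v -> exp u <= exp v.
Proof. intros [Huv | ->]; [left; now apply exp_increasing | lra]. Qed.

(* On [1/2, 1] every power s^r is at most 2^|r|. *)
Definition half_power_bound (r : R) : R := exp (Rabs r * ln 2).

Lemma half_power_bound_ge_1 (r : R) : 1 <= half_power_bound r.
Proof.
  unfold half_power_bound. rewrite <- exp_0. apply exp_le_mono.
  pose proof (Rabs_pos r). pose proof ln_lt_2. nra.
Qed.

Lemma Rpower_le_half_power_bound (s r : R) : / 2 <= s <= 1 -> Rpower s r <= half_power_bound r.
Proof.
  intros Hs. unfold Rpower, half_power_bound. apply exp_le_mono.
  assert (Hln1 : ln s <= 0) by (rewrite <- ln_1; apply ln_le; lra).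
  assert (Hln2 : - ln 2 <= ln s) by (rewrite <- ln_Rinv by lra; apply ln_le; lra).
  pose proof ln_lt_2.
  destruct (Rle_or_lt 0 r).
  - rewrite Rabs_pos_eq by lra. nra.
  - rewrite Rabs_left by lra. nra.
Qed.

(** The beta integrand and its integrals over compact segments of (0,1). *)

Lemma beta_integrand_pos (a q t : R) : 0 < beta_integrand a q t.
Proof. apply Rmult_lt_0_compat; apply Rpower_pos. Qed.

Lemma continuous_beta_integrand (a q t : R) : 0 < t < 1 -> continuous (beta_integrand a q) t.
Proof.
  intros Ht.
  apply (continuous_mult (fun s => Rpower s (a - 1)) (fun s => Rpower (1 - s) (q - 1))).
  - apply continuous_Rpower; lra.
  - apply continuous_Rpower_compl; lra.
Qed.

Lemma ex_RInt_beta_integrand (a q al be : R) : 0 < al -> al <= be -> be < 1 ->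
  ex_RInt (beta_integrand a q) al be.
Proof.
  intros Hal Hab Hbe. apply (@ex_RInt_continuous R_CompleteNormedModule).
  intros z Hz. rewrite Rmin_left, Rmax_right in Hz by lra.
  apply continuous_beta_integrand. lra.
Qed.

Definition beta_segment (a q al be : R) : R := RInt (beta_integrand a q) al be.

Lemma beta_segment_nonneg (a q al be : R) : 0 < al -> al <= be -> be < 1 ->
  0 <= beta_segment a q al be.
Proof.
  intros. apply RInt_ge_0; [lra | now apply ex_RInt_beta_integrand |].
  intros; left; apply beta_integrand_pos.
Qed.

Lemma beta_segment_mono (a q al be al' be' : R) :
  0 < al' -> al' <= al -> al <= be -> be <= be' -> be' < 1 ->
  beta_segment a q al be <= beta_segment a q al' be'.
Proof.
  intros. unfold beta_segment.
  rewrite <- (RInt_Chasles _ al' al be') by (apply ex_RInt_beta_integrand; lra).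
  rewrite <- (RInt_Chasles _ al be be') by (apply ex_RInt_beta_integrand; lra).
  pose proof (beta_segment_nonneg a q al' al ltac:(lra) ltac:(lra) ltac:(lra)).
  pose proof (beta_segment_nonneg a q be be' ltac:(lra) ltac:(lra) ltac:(lra)).
  unfold beta_segment in *. real_ops. lra.
Qed.

Lemma beta_segment_pos (a q : R) : 0 < beta_segment a q (/ 4) (/ 2).
Proof.
  apply RInt_gt_0; [lra | intros; apply beta_integrand_pos |].
  intros; apply continuous_beta_integrand; lra.
Qed.

(* The monomial t^a (1-t)^q, whose derivative expresses the contiguity of
   consecutive beta integrands: (t^a (1-t)^q)' = a F_a - (a+q) F_(a+1). *)
Definition beta_monomial (a q t : R) : R := Rpower t a * Rpower (1 - t) q.

Lemma is_derive_beta_monomial (a q t : R) : 0 < t < 1 ->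
  is_derive (beta_monomial a q) t (a * beta_integrand a q t - (a + q) * beta_integrand (a + 1) q t).
Proof.
  intros Ht.
  pose proof (is_derive_mult (fun s => Rpower s a) (fun s => Rpower (1 - s) q) t _ _
     (is_derive_Rpower t a ltac:(lra)) (is_derive_Rpower_compl t q ltac:(lra))
     ltac:(intros; apply Rmult_comm)) as Hd.
  eapply is_derive_ext; [intros; reflexivity |].
  match type of Hd with is_derive _ _ ?v => replace (_ - _) with v; [exact Hd |] end.
  unfold beta_integrand. real_ops.
  replace (a + 1 - 1) with a by ring.
  rewrite (Rpower_peel t a), (Rpower_peel (1 - t) q) by lra. ring.
Qed.

Lemma beta_segment_parts (a q al be : R) : 0 < al -> al <= be -> be < 1 ->
  a * beta_segment a q al be - (a + q) * beta_segment (a + 1) q al be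
  = beta_monomial a q be - beta_monomial a q al.
Proof.
  intros Hal Hab Hbe. unfold beta_segment.
  assert (Hder : is_RInt (fun t => a * beta_integrand a q t - (a + q) * beta_integrand (a + 1) q t)
                   al be (beta_monomial a q be - beta_monomial a q al)).
  { apply (@is_RInt_derive R_CompleteNormedModule);
      intros t Ht; rewrite Rmin_left, Rmax_right in Ht by lra.
    - apply is_derive_beta_monomial. lra.
    - apply (continuous_minus (fun t => a * beta_integrand a q t)
                              (fun t => (a + q) * beta_integrand (a + 1) q t));
        apply (continuous_scal_r _ (fun t => beta_integrand _ q t));
        apply continuous_beta_integrand; lra. }
  assert (Hlin : is_RInt (fun t => a * beta_integrand a q t - (a + q) * beta_integrand (a + 1) q t)
                   al be (a * RInt (beta_integrand a q) al be
                          - (a + q) * RInt (beta_integrand (a + 1) q) al be)).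
  { apply (@is_RInt_minus R_CompleteNormedModule);
      apply (@is_RInt_scal R_CompleteNormedModule); apply RInt_correct;
      apply ex_RInt_beta_integrand; lra. }
  exact (filterlim_locally_unique _ _ _ Hlin Hder).
Qed.

(* A constant dominating the integrand by the derivative of t^a - (1-t)^q;
   it yields a bound on all segment integrals, uniform in the segment. *)
Definition beta_domination (a q : R) : R :=
  (half_power_bound (q - 1) + half_power_bound (a - 1)) * (/ a + / q).

Lemma beta_domination_nonneg (a q : R) : 0 < a -> 0 < q -> 0 <= beta_domination a q.
Proof.
  intros Ha Hq. unfold beta_domination.
  pose proof (half_power_bound_ge_1 (q - 1)). pose proof (half_power_bound_ge_1 (a - 1)).
  pose proof (Rinv_0_lt_compat a Ha). pose proof (Rinv_0_lt_compat q Hq). nra.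
Qed.

Lemma beta_integrand_dominated (a q t : R) : 0 < a -> 0 < q -> 0 < t < 1 ->
  beta_integrand a q t
  <= beta_domination a q * (a * Rpower t (a - 1) + q * Rpower (1 - t) (q - 1)).
Proof.
  intros Ha Hq Ht. unfold beta_integrand, beta_domination.
  set (u := Rpower t (a - 1)). set (v := Rpower (1 - t) (q - 1)).
  assert (Hu : 0 < u) by apply Rpower_pos. assert (Hv : 0 < v) by apply Rpower_pos.
  pose proof (half_power_bound_ge_1 (q - 1)). pose proof (half_power_bound_ge_1 (a - 1)).
  (* One of the two factors is evaluated in [1/2, 1], where it is bounded. *)
  assert (Hsplit : u * v <= (half_power_bound (q - 1) + half_power_bound (a - 1)) * (u + v)).
  { destruct (Rle_or_lt t (/ 2)).
    - pose proof (Rpower_le_half_power_bound (1 - t) (q - 1) ltac:(lra)) as Hb.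
      fold v in Hb. nra.
    - pose proof (Rpower_le_half_power_bound t (a - 1) ltac:(lra)) as Hb.
      fold u in Hb. nra. }
  assert (Hweights : u + v <= (/ a + / q) * (a * u + q * v)).
  { replace ((/ a + / q) * (a * u + q * v)) with (u + v + / q * a * u + / a * q * v)
      by (field; lra).
    pose proof (Rinv_0_lt_compat a Ha). pose proof (Rinv_0_lt_compat q Hq).
    assert (0 <= / q * a * u) by (apply Rmult_le_pos; nra).
    assert (0 <= / a * q * v) by (apply Rmult_le_pos; nra). lra. }
  rewrite Rmult_assoc. eapply Rle_trans; [exact Hsplit |].
  apply Rmult_le_compat_l; lra.
Qed.

Lemma beta_segment_bounded (a q al be : R) : 0 < a -> 0 < q -> 0 < al -> al <= be -> be < 1 ->
  beta_segment a q al be <= 2 * beta_domination a q.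
Proof.
  intros Ha Hq Hal Hab Hbe.
  set (G t := Rpower t a - Rpower (1 - t) q).
  set (dG t := a * Rpower t (a - 1) + q * Rpower (1 - t) (q - 1)).
  assert (HG : is_RInt dG al be (G be - G al)).
  { apply (@is_RInt_derive R_CompleteNormedModule G dG);
      intros t Ht; rewrite Rmin_left, Rmax_right in Ht by lra.
    - replace (dG t) with (minus (a * Rpower t (a - 1)) (- (q * Rpower (1 - t) (q - 1))))
        by (unfold dG; real_ops; ring).
      apply (is_derive_minus (fun s => Rpower s a) (fun s => Rpower (1 - s) q));
        [apply is_derive_Rpower | apply is_derive_Rpower_compl]; lra.
    - apply (continuous_plus (fun t => a * Rpower t (a - 1)) (fun t => q * Rpower (1 - t) (q - 1)));
        apply (continuous_scal_r _ (fun t => Rpower _ _));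
        [apply continuous_Rpower | apply continuous_Rpower_compl]; lra. }
  assert (HCG : is_RInt (fun t => beta_domination a q * dG t) al be
                  (beta_domination a q * (G be - G al))).
  { exact (@is_RInt_scal R_CompleteNormedModule _ _ _ (beta_domination a q) _ HG). }
  assert (Hle : beta_segment a q al be <= beta_domination a q * (G be - G al)).
  { rewrite <- (is_RInt_unique _ _ _ _ HCG).
    apply RInt_le; [lra | now apply ex_RInt_beta_integrand | eexists; exact HCG |].
    intros t Ht. apply beta_integrand_dominated; lra. }
  unfold G in Hle.
  pose proof (Rpower_le_1 be a ltac:(lra) ltac:(lra)). pose proof (Rpower_pos al a).
  pose proof (Rpower_le_1 (1 - al) q ltac:(lra) ltac:(lra)). pose proof (Rpower_pos (1 - be) q).
  pose proof (beta_domination_nonneg a q Ha Hq). nra.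
Qed.

(** The incomplete beta integral as a supremum of segment integrals. *)

Lemma beta_partial_integrals_segment (a q y al be : R) :
  0 < al -> al <= be -> be < y -> be < 1 ->
  beta_partial_integrals a q y (beta_segment a q al be).
Proof.
  intros. right.
  exists al, be, (ex_RInt_Reals_0 _ _ _ (ex_RInt_beta_integrand a q al be ltac:(lra) ltac:(lra) ltac:(lra))).
  repeat split; try lra. apply RInt_Reals.
Qed.

Lemma beta_partial_integrals_cases (a q y v : R) : beta_partial_integrals a q y v ->
  v = 0 \/ exists al be, 0 < al /\ al <= be /\ be < y /\ be < 1 /\ v = beta_segment a q al be.
Proof.
  intros [Hv | (al & be & pr & Hal & Hab & Hby & Hb1 & ->)]; [now left | right].
  exists al, be. repeat split; auto. symmetry. apply RInt_Reals.
Qed.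

Lemma incbeta_int_lub (a q y : R) : 0 < a -> 0 < q ->
  is_lub (beta_partial_integrals a q y) (incbeta_int a q y).
Proof.
  intros Ha Hq. unfold incbeta_int. apply epsilon_spec.
  destruct (completeness (beta_partial_integrals a q y)) as [m Hm]; [| now exists 0; left | now exists m].
  exists (2 * beta_domination a q). intros v Hv.
  destruct (beta_partial_integrals_cases _ _ _ _ Hv) as [-> | (al & be & ? & ? & ? & ? & ->)].
  - pose proof (beta_domination_nonneg a q Ha Hq). lra.
  - apply beta_segment_bounded; lra.
Qed.

Lemma incbeta_int_nonneg (a q y : R) : 0 < a -> 0 < q -> 0 <= incbeta_int a q y.
Proof. intros Ha Hq. apply (incbeta_int_lub a q y Ha Hq). now left. Qed.

Lemma incbeta_int_le_Beta (a q y : R) : 0 < a -> 0 < q -> y <= 1 ->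
  incbeta_int a q y <= Beta a q.
Proof.
  intros Ha Hq Hy. apply (incbeta_int_lub a q y Ha Hq). intros v Hv.
  apply (incbeta_int_lub a q 1 Ha Hq).
  destruct (beta_partial_integrals_cases _ _ _ _ Hv) as [-> | (al & be & ? & ? & ? & ? & ->)].
  - now left.
  - apply beta_partial_integrals_segment; lra.
Qed.

Lemma incbeta_int_nonpos (a q y : R) : 0 < a -> 0 < q -> y <= 0 -> incbeta_int a q y = 0.
Proof.
  intros Ha Hq Hy. apply Rle_antisym; [| now apply incbeta_int_nonneg].
  apply (incbeta_int_lub a q y Ha Hq). intros v Hv.
  destruct (beta_partial_integrals_cases _ _ _ _ Hv) as [-> | (al & be & ? & ? & ? & ? & ->)]; lra.
Qed.

Lemma Beta_pos (a q : R) : 0 < a -> 0 < q -> 0 < Beta a q.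
Proof.
  intros Ha Hq. apply Rlt_le_trans with (beta_segment a q (/ 4) (/ 2)).
  - apply beta_segment_pos.
  - apply (incbeta_int_lub a q 1 Ha Hq). apply beta_partial_integrals_segment; lra.
Qed.

(** Exhausting (0, y) by the segments [y e_n, y (1 - e_n)] with e_n = 2^-(n+1). *)

Definition shrink (n : nat) : R := (/ 2) ^ S n.

Lemma shrink_bounds (n : nat) : 0 < shrink n <= / 2.
Proof.
  unfold shrink. split; [apply pow_lt; lra |].
  simpl. pose proof (pow_le (/ 2) n ltac:(lra)).
  pose proof (pow_incr (/ 2) 1 n ltac:(lra)) as H1. rewrite pow1 in H1. nra.
Qed.

Lemma Rpower_shrink_lim (r : R) : 0 < r -> is_lim_seq (fun n => Rpower (shrink n) r) 0.
Proof.
  intros Hr.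
  assert (Hratio : 0 < Rpower (/ 2) r < 1).
  { split; [apply Rpower_pos |]. rewrite <- (Rpower_one r). apply Rlt_Rpower_l; lra. }
  apply (is_lim_seq_ext (fun n => Rpower (/ 2) r ^ S n)).
  - intros n. unfold shrink. rewrite <- !Rpower_pow by lra.
    rewrite !Rpower_mult. f_equal. ring.
  - apply (is_lim_seq_incr_1 (fun n => Rpower (/ 2) r ^ n)). apply is_lim_seq_geom.
    rewrite Rabs_pos_eq; lra.
Qed.

Lemma shrink_lim : is_lim_seq shrink 0.
Proof.
  apply (is_lim_seq_ext (fun n => Rpower (shrink n) 1)); [| apply Rpower_shrink_lim; lra].
  intros n. apply Rpower_1, shrink_bounds.
Qed.

Lemma is_lub_approx (E : R -> Prop) (m eps : R) : is_lub E m -> 0 < eps ->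
  exists v, E v /\ m - eps < v.
Proof.
  intros [Hub Hleast] Heps. apply NNPP. intros Hno.
  assert (m <= m - eps); [| lra].
  apply Hleast. intros v Hv. apply Rnot_lt_le. intros Hlt. apply Hno. now exists v.
Qed.

Lemma shrink_segment_eventually (y al be : R) : 0 < y <= 1 -> 0 < al -> be < y ->
  exists N, forall n, (N <= n)%nat -> y * shrink n < al /\ be < y * (1 - shrink n).
Proof.
  intros Hy Hal Hbe.
  assert (Hdelta : 0 < Rmin al (y - be)) by (apply Rmin_glb_lt; lra).
  pose proof shrink_lim as Hlim. apply is_lim_seq_spec in Hlim.
  destruct (Hlim (mkposreal _ Hdelta)) as [N HN]. exists N. intros n Hn.
  specialize (HN n Hn). simpl in HN. rewrite Rminus_0_r in HN.
  pose proof (shrink_bounds n). rewrite Rabs_pos_eq in HN by lra.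
  pose proof (Rmin_l al (y - be)). pose proof (Rmin_r al (y - be)). nra.
Qed.

Lemma incbeta_int_lim (a q y : R) : 0 < a -> 0 < q -> 0 < y <= 1 ->
  is_lim_seq (fun n => beta_segment a q (y * shrink n) (y * (1 - shrink n))) (incbeta_int a q y).
Proof.
  intros Ha Hq Hy. pose proof (incbeta_int_lub a q y Ha Hq) as Hlub.
  assert (Hin : forall n, beta_partial_integrals a q y (beta_segment a q (y * shrink n) (y * (1 - shrink n)))).
  { intros n. pose proof (shrink_bounds n). apply beta_partial_integrals_segment; nra. }
  assert (Hnn : forall n, 0 <= beta_segment a q (y * shrink n) (y * (1 - shrink n))).
  { intros n. pose proof (shrink_bounds n). apply beta_segment_nonneg; nra. }
  apply is_lim_seq_spec. intros eps.
  destruct (is_lub_approx _ _ eps Hlub (cond_pos eps)) as (v & Hv & Hclose).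
  destruct (beta_partial_integrals_cases _ _ _ _ Hv) as [-> | (al & be & ? & ? & ? & ? & ->)].
  - exists 0%nat. intros n _. pose proof (proj1 Hlub _ (Hin n)). specialize (Hnn n).
    rewrite Rabs_left1 by lra. lra.
  - destruct (shrink_segment_eventually y al be Hy ltac:(lra) ltac:(lra)) as [N HN].
    exists N. intros n Hn. destruct (HN n Hn) as [Hlo Hhi].
    pose proof (shrink_bounds n).
    pose proof (beta_segment_mono a q al be (y * shrink n) (y * (1 - shrink n))
                  ltac:(nra) ltac:(lra) ltac:(lra) ltac:(lra) ltac:(nra)).
    pose proof (proj1 Hlub _ (Hin n)).
    rewrite Rabs_left1 by lra. lra.
Qed.

(** The contiguous relation of the incomplete beta integral. *)

(* The boundary term y^a (1-y)^q of the integration by parts; it vanishes at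
   the endpoints y = 0 and y = 1 (and is set to 0 outside (0,1)). *)
Definition beta_boundary (a q y : R) : R :=
  if Rlt_dec 0 y then (if Rlt_dec y 1 then beta_monomial a q y else 0) else 0.

Lemma beta_monomial_lim_lower (a q y : R) : 0 < a -> 0 < q -> 0 < y <= 1 ->
  is_lim_seq (fun n => beta_monomial a q (y * shrink n)) 0.
Proof.
  intros Ha Hq Hy.
  apply (is_lim_seq_le_le (fun _ => 0) _ (fun n => Rpower (shrink n) a));
    [| apply is_lim_seq_const | now apply Rpower_shrink_lim].
  intros n. pose proof (shrink_bounds n). unfold beta_monomial. split.
  - apply Rmult_le_pos; left; apply Rpower_pos.
  - pose proof (Rpower_le_1 (1 - y * shrink n) q ltac:(nra) ltac:(lra)).
    pose proof (Rle_Rpower_l (y * shrink n) (shrink n) a ltac:(lra) ltac:(nra)).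
    pose proof (Rpower_pos (y * shrink n) a). nra.
Qed.

Lemma beta_monomial_lim_upper (a q y : R) : 0 < a -> 0 < q -> 0 < y <= 1 ->
  is_lim_seq (fun n => beta_monomial a q (y * (1 - shrink n))) (beta_boundary a q y).
Proof.
  intros Ha Hq Hy. unfold beta_boundary.
  destruct (Rlt_dec 0 y) as [_ | ]; [| lra].
  destruct (Rlt_dec y 1) as [Hy1 | Hy1].
  -
    apply (is_lim_seq_continuous (beta_monomial a q)).
    + apply continuity_pt_filterlim.
      apply (continuous_mult (fun s => Rpower s a) (fun s => Rpower (1 - s) q));
        [apply continuous_Rpower | apply continuous_Rpower_compl]; lra.
    + assert (Hlim : is_lim_seq (fun n => y * (1 - shrink n)) (y * (1 - 0))).
      { apply is_lim_seq_mult'; [apply is_lim_seq_const |].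
        apply is_lim_seq_minus'; [apply is_lim_seq_const | apply shrink_lim]. }
      now rewrite Rminus_0_r, Rmult_1_r in Hlim.
  - (* at y = 1 the factor (1-t)^q is a positive power of shrink n *)
    replace y with 1 by lra.
    apply (is_lim_seq_le_le (fun _ => 0) _ (fun n => Rpower (shrink n) q));
      [| apply is_lim_seq_const | now apply Rpower_shrink_lim].
    intros n. pose proof (shrink_bounds n). unfold beta_monomial. split.
    + apply Rmult_le_pos; left; apply Rpower_pos.
    + replace (1 - 1 * (1 - shrink n)) with (shrink n) by ring.
      pose proof (Rpower_le_1 (1 * (1 - shrink n)) a ltac:(nra) ltac:(lra)).
      pose proof (Rpower_pos (shrink n) q). nra.
Qed.

(* a J_a(y) - (a+q) J_(a+1)(y) = y^a (1-y)^q, obtained by integrating by parts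
   on the exhausting segments and passing to the limit. *)
Lemma incbeta_int_recurrence (a q y : R) : 0 < a -> 0 < q -> 0 <= y <= 1 ->
  a * incbeta_int a q y - (a + q) * incbeta_int (a + 1) q y = beta_boundary a q y.
Proof.
  intros Ha Hq Hy. destruct (Rle_lt_dec y 0) as [Hy0 | Hy0].
  - rewrite !incbeta_int_nonpos by lra. unfold beta_boundary.
    destruct (Rlt_dec 0 y); [lra | ring].
  - set (D n := a * beta_segment a q (y * shrink n) (y * (1 - shrink n))
                - (a + q) * beta_segment (a + 1) q (y * shrink n) (y * (1 - shrink n))).
    assert (HD1 : is_lim_seq D (a * incbeta_int a q y - (a + q) * incbeta_int (a + 1) q y)).
    { apply is_lim_seq_minus'; apply is_lim_seq_mult'; try apply is_lim_seq_const;
        apply incbeta_int_lim; lra. }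
    assert (HD2 : is_lim_seq D (beta_boundary a q y - 0)).
    { apply (is_lim_seq_ext (fun n => beta_monomial a q (y * (1 - shrink n))
                                      - beta_monomial a q (y * shrink n))).
      - intros n. pose proof (shrink_bounds n). symmetry. apply beta_segment_parts; nra.
      - apply is_lim_seq_minus';
          [apply beta_monomial_lim_upper | apply beta_monomial_lim_lower]; lra. }
    apply is_lim_seq_unique in HD1, HD2. rewrite HD1 in HD2.
    injection HD2 as ->. ring.
Qed.

Lemma beta_boundary_succ (a q y : R) : beta_boundary (a + 1) q y = y * beta_boundary a q y.
Proof.
  unfold beta_boundary. destruct (Rlt_dec 0 y); [| ring]. destruct (Rlt_dec y 1); [| ring].
  unfold beta_monomial. rewrite (Rpower_peel y (a + 1)) by lra.
  replace (a + 1 - 1) with a by ring. ring.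
Qed.

(* B(a+1, q) = a B(a, q) / (a + q): the recurrence at y = 1. *)
Lemma Beta_succ (a q : R) : 0 < a -> 0 < q -> Beta (a + 1) q = a * Beta a q / (a + q).
Proof.
  intros Ha Hq. pose proof (incbeta_int_recurrence a q 1 Ha Hq ltac:(lra)) as Hrec.
  unfold beta_boundary in Hrec. destruct (Rlt_dec 0 1); [| lra]. destruct (Rlt_dec 1 1); [lra |].
  unfold Beta. field_simplify_eq; lra.
Qed.

Lemma I_reg_bounds (a q y : R) : 0 < a -> 0 < q -> y <= 1 -> 0 <= I_reg y a q <= 1.
Proof.
  intros Ha Hq Hy. unfold I_reg. pose proof (Beta_pos a q Ha Hq).
  pose proof (incbeta_int_nonneg a q y Ha Hq). pose proof (incbeta_int_le_Beta a q y Ha Hq Hy).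
  split.
  - apply Rdiv_le_0_compat; lra.
  - apply Rmult_le_reg_r with (Beta a q); [lra |].
    unfold Rdiv. rewrite Rmult_assoc, Rinv_l; lra.
Qed.

Lemma I_reg_diff (a q y : R) : 0 < a -> 0 < q -> 0 <= y <= 1 ->
  I_reg y a q - I_reg y (a + 1) q = beta_boundary a q y / (a * Beta a q).
Proof.
  intros Ha Hq Hy. unfold I_reg.
  pose proof (Beta_pos a q Ha Hq). pose proof (Beta_pos (a + 1) q ltac:(lra) Hq).
  rewrite Beta_succ, <- (incbeta_int_recurrence a q y) by lra.
  field. unfold Beta in *. lra.
Qed.

Lemma I_reg_contiguous (a q y : R) : 0 < a -> 0 < q -> 0 <= y <= 1 ->
  (a + 1) * (I_reg y (a + 1) q - I_reg y (a + 1 + 1) q)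
  = (a + q) * y * (I_reg y a q - I_reg y (a + 1) q).
Proof.
  intros Ha Hq Hy. pose proof (Beta_pos a q Ha Hq).
  rewrite !I_reg_diff, beta_boundary_succ, Beta_succ by lra.
  field. repeat split; lra.
Qed.

Definition poisson_weight (x : R) (j : nat) : R := / INR (Factorial.fact j) * (x / 2) ^ j.

Definition poisson_mixture (x : R) (f : R -> R) (k : R) : R :=
  series_sum (fun j => poisson_weight x j * f (k + INR j)).

Lemma ncbeta_poisson_mixture (p q x y : R) :
  ncbeta p q x y = exp (- x / 2) * poisson_mixture x (fun a => I_reg y a q) p.
Proof. reflexivity. Qed.

Lemma poisson_weight_series (x : R) : is_series (poisson_weight x) (exp (x / 2)).
Proof.
  eapply is_series_ext; [| exact (is_exp_Reals (x / 2))].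
  intros n. unfold poisson_weight. rewrite pow_n_pow. real_ops. ring.
Qed.

Lemma poisson_weight_nonneg (x : R) (j : nat) : 0 <= x -> 0 <= poisson_weight x j.
Proof.
  intros Hx. apply Rmult_le_pos.
  - left. apply Rinv_0_lt_compat, INR_fact_lt_0.
  - apply pow_le. lra.
Qed.

Lemma poisson_weight_succ (x : R) (j : nat) :
  INR (S j) * poisson_weight x (S j) = x / 2 * poisson_weight x j.
Proof.
  unfold poisson_weight. rewrite fact_simpl, mult_INR. simpl pow.
  pose proof (INR_fact_lt_0 j). assert (0 < INR (S j)) by (apply lt_0_INR; lia).
  field. lra.
Qed.

Lemma is_series_zero_unique (L : R) : is_series (fun _ : nat => 0) L -> L = 0.
Proof.
  intros HL. rewrite <- (is_series_unique _ _ HL).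
  rewrite (Series_ext _ (fun _ : nat => 0 * 0)) by (intros; ring).
  rewrite Series_scal_l. ring.
Qed.

(* A mixture of values in [0, 1] converges, being dominated by the exponential series. *)
Lemma poisson_mixture_series (x : R) (f : R -> R) (k : R) :
  0 <= x -> (forall a, k <= a -> 0 <= f a <= 1) ->
  is_series (fun j => poisson_weight x j * f (k + INR j)) (poisson_mixture x f k).
Proof.
  intros Hx Hf.
  assert (Hbd : forall j, 0 <= f (k + INR j) <= 1) by (intros j; apply Hf; pose proof (pos_INR j); lra).
  assert (Hex : ex_series (fun j => poisson_weight x j * f (k + INR j))).
  { apply (@ex_series_le R_AbsRing R_CompleteNormedModule _ (poisson_weight x));
      [| eexists; apply poisson_weight_series].
    intros j. pose proof (poisson_weight_nonneg x j Hx). specialize (Hbd j).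
    unfold norm; simpl. rewrite Rabs_pos_eq; nra. }
  destruct Hex as [l Hl]. unfold poisson_mixture, series_sum.
  apply is_series_Reals, epsilon_spec. exists l. now apply is_series_Reals.
Qed.

Lemma poisson_mixture_shift (x : R) (f : R -> R) (k : R) :
  0 <= x -> (forall a, k <= a -> 0 <= f a <= 1) ->
  is_series (fun j => INR j * (poisson_weight x j * f (k + INR j)))
    (x / 2 * poisson_mixture x f (k + 1)).
Proof.
  intros Hx Hf.
  assert (Hnext : is_series (fun j => poisson_weight x j * f (k + 1 + INR j))
                    (poisson_mixture x f (k + 1))).
  { apply poisson_mixture_series; [exact Hx |]. intros a Ha. apply Hf. lra. }
  apply is_series_decr_1. rewrite Rmult_0_l. real_ops. rewrite Ropp_0, Rplus_0_r.
  eapply is_series_ext; [| exact (is_series_scal_l (x / 2) _ _ Hnext)].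
  intros j. real_ops. rewrite <- (Rmult_assoc (INR (S j))), poisson_weight_succ, S_INR.
  replace (k + 1 + INR j) with (k + (INR j + 1)) by ring. ring.
Qed.

(* Poisson mixing turns a contiguous relation with coefficients affine in the
   parameter into a four-term relation with constant coefficients: the part of
   the coefficient proportional to j is absorbed by poisson_mixture_shift. *)
Lemma poisson_mixture_contiguous (x : R) (f : R -> R) (k s c : R) :
  0 <= x -> (forall a, k <= a -> 0 <= f a <= 1) ->
  (forall a, k <= a -> (a + 1) * (f (a + 1) - f (a + 1 + 1)) = (a + s) * c * (f a - f (a + 1))) ->
  let M := poisson_mixture x f in
  (k + 1) * (M (k + 1) - M (k + 2)) + x / 2 * (M (k + 2) - M (k + 3))
  = (k + s) * c * (M k - M (k + 1)) + c * (x / 2) * (M (k + 1) - M (k + 2)).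
Proof.
  intros Hx Hf Hrel M.
  assert (Hf' : forall i, 0 <= i -> forall a, k + i <= a -> 0 <= f a <= 1)
    by (intros i Hi a Ha; apply Hf; lra).
  pose proof (poisson_mixture_series x f k Hx Hf) as A0.
  pose proof (poisson_mixture_series x f (k + 1) Hx (Hf' 1 ltac:(lra))) as A1.
  pose proof (poisson_mixture_series x f (k + 2) Hx (Hf' 2 ltac:(lra))) as A2.
  pose proof (poisson_mixture_shift x f k Hx Hf) as S0.
  pose proof (poisson_mixture_shift x f (k + 1) Hx (Hf' 1 ltac:(lra))) as S1.
  pose proof (poisson_mixture_shift x f (k + 2) Hx (Hf' 2 ltac:(lra))) as S2.
  replace (k + 1 + 1) with (k + 2) in S1 by ring.
  replace (k + 2 + 1) with (k + 3) in S2 by ring.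
  pose proof (is_series_minus _ _ _ _
     (is_series_plus _ _ _ _ (is_series_scal_l (k + 1) _ _ (is_series_minus _ _ _ _ A1 A2))
                             (is_series_minus _ _ _ _ S1 S2))
     (is_series_plus _ _ _ _ (is_series_scal_l ((k + s) * c) _ _ (is_series_minus _ _ _ _ A0 A1))
                             (is_series_scal_l c _ _ (is_series_minus _ _ _ _ S0 S1)))) as Hcomb.
  apply Rminus_diag_uniq, is_series_zero_unique.
  match type of Hcomb with is_series _ ?L => replace (_ - _) with L by (real_ops; unfold M; ring) end.
  eapply is_series_ext; [| exact Hcomb].
  intros j. real_ops. pose proof (pos_INR j) as Hj.
  specialize (Hrel (k + INR j) ltac:(lra)).
  replace (k + INR j + 1) with (k + 1 + INR j) in Hrel by ring.
  replace (k + 1 + INR j + 1) with (k + 2 + INR j) in Hrel by ring.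
  transitivity (poisson_weight x j * ((k + 1 + INR j) * (f (k + 1 + INR j) - f (k + 2 + INR j))
                 - (k + INR j + s) * c * (f (k + INR j) - f (k + 1 + INR j)))).
  - ring.
  - rewrite Hrel. ring.
Qed.

Theorem mainTheorem7 (p q x y : R) :
  0 < p -> 0 < q -> 0 <= x -> 0 <= y <= 1 ->
  let c0 := (p + q) * y ^ 2 in
  let c1 := - y * (p + 1 - / 2 * x * y + y * (p + q)) in
  let c2 := y * (p + 1 - / 2 * x * y) - / 2 * x * y in
  let c3 := / 2 * x * y in
  (c3 * ncbeta (p + 3) q x y + c2 * ncbeta (p + 2) q x y
     + c1 * ncbeta (p + 1) q x y + c0 * ncbeta p q x y = 0) /\
  (c3 * ncbeta_c (p + 3) q x y + c2 * ncbeta_c (p + 2) q x y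
     + c1 * ncbeta_c (p + 1) q x y + c0 * ncbeta_c p q x y = 0).
Proof.
  intros Hp Hq Hx Hy c0 c1 c2 c3.
  set (f a := I_reg y a q).
  assert (Hf : forall a, p <= a -> 0 <= f a <= 1) by (intros a Ha; apply I_reg_bounds; lra).
  assert (Hrel : forall a, p <= a ->
            (a + 1) * (f (a + 1) - f (a + 1 + 1)) = (a + q) * y * (f a - f (a + 1)))
    by (intros a Ha; apply I_reg_contiguous; lra).
  pose proof (poisson_mixture_contiguous x f p q y Hx Hf Hrel) as Hmix. cbv zeta in Hmix.
  unfold ncbeta_c. rewrite !ncbeta_poisson_mixture. fold f.
  (* Both identities are multiples of the Poisson-mixed contiguous relation,
     the second one because c0 + c1 + c2 + c3 = 0. *)
  match type of Hmix with ?L = ?R =>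
    split; [transitivity (- y * exp (- x / 2) * (L - R)) | transitivity (y * exp (- x / 2) * (L - R))]
  end; solve [unfold c0, c1, c2, c3; field | rewrite Hmix; ring].
Qed.
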